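(* Let $\mathbb{K}$ be a semiring and let $\mathcal{A}=(Q,A,E,I,T)$ and $\mathcal{B}=(R,A,F,J,U)$ be two two-way $\mathbb{K}$-automata. If $\mathcal{A}$ is a covering (respectively an in-covering) of $\mathcal{B}$ via the surjective morphism $\varphi:Q\to R$, then the map sending a computation $((p_0,i_0),\dots,(p_k,i_k))$ of $\mathcal{A}$ to $((\varphi(p_0),i_0),\dots,(\varphi(p_k),i_k))$ is a bijection between the computations of $\mathcal{A}$ and the computations of $\mathcal{B}$, and every computation of $\mathcal{A}$ and its image in $\mathcal{B}$ have the same label and the same weight.
   Context: A semiring $\mathbb{K}$ has addition $\oplus$ and multiplication $\otimes$ with the usual axioms. With $A_{\vdash\dashv}=A\cup\{\vdash,\dashv\}$ ($\vdash,\dashv$ fresh end-markers), a two-way $\mathbb{K}$-automaton $(Q,A,E,I,T)$ has finite state set $Q$, partial functions $I,T:Q\to\mathbb{K}$ (supports $\underline I$, $\underline T$ are the initial/final states), and a partial function $E:Q\times(A_{\vdash\dashv}\times\{-1,+1\})\times Q\to\mathbb{K}$ whose support $\underline E$ (the transitions) contains no $(p,\vdash,-1,q)$ nor $(p,\dashv,+1,q)$. For $t=(p,a,d,q)$: $\sigma(t)=p$, $\tau(t)=q$, $\lambda(t)=a$, $\delta(t)=d$. For $w=w_1\cdots w_n$ let $w_0=\vdash$, $w_{n+1}=\dashv$. A computation on $w$ (its label) is a sequence of configurations $((p_0,i_0),\dots,(p_k,i_k))$, $p_j\in Q$, $i_j\in[0;n+1]$, with $i_0=1$, $i_k=n+1$,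 $p_0\in\underline I$, $p_k\in\underline T$, and for each $j<k$ a transition $t_j\in\underline E$ with $\sigma(t_j)=p_j$, $\tau(t_j)=p_{j+1}$, $\lambda(t_j)=w_{i_j}$, $i_{j+1}=i_j+\delta(t_j)$; its weight is $I(p_0)\otimes\bigotimes_{j=0}^{k-1}E(t_j)\otimes T(p_k)$. A morphism from $\mathcal{A}=(Q,A,E,I,T)$ to $\mathcal{B}=(R,A,F,J,U)$ is a map $\varphi:Q\to R$ such that (i) $J(\varphi(p))=I(p)$ for all $p\in\underline I$; (ii) $U(\varphi(p))=T(p)$ for all $p\in\underline T$; (iii) for every $t=(p,a,d,q)\in\underline E$, $\tilde\varphi(t)=(\varphi(p),a,d,\varphi(q))\in\underline F$ and $F(\tilde\varphi(t))=E(t)$. It is surjective if $\varphi(Q)=R$, $\varphi(\underline I)=\underline J$, $\varphi(\underline T)=\underline U$ and $\tilde\varphi(\underline E)=\underline F$. $\mathcal{A}$ is a covering of $\mathcal{B}$ if there is a surjective morphism $\varphi$ with: (i) for all $r\in\underline U$, $\varphi^{-1}(r)\subseteq\underline T$; (ii) for all $r\in\underline J$ there is exactly one $p\in\varphi^{-1}(r)\cap\underline I$; (iii) for all $t\in\underline F$ and all $p\in\varphi^{-1}(\sigma(t))$ there is exactly one $t'\in\underline E$ with $\tilde\varphi(t')=t$ and $\sigma(t')=p$. $\mathcal{A}$ is an in-covering of $\mathcal{B}$ if there is a surjective morphism $\varphi$ with: (i) for all $r\in\underline J$, $\varphi^{-1}(r)\subseteq\underline I$; (ii) for all $r\in\underline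 U$ there is exactly one $p\in\varphi^{-1}(r)\cap\underline T$; (iii) for all $t\in\underline F$ and all $q\in\varphi^{-1}(\tau(t))$ there is exactly one $t'\in\underline E$ with $\tilde\varphi(t')=t$ and $\tau(t')=q$. *)

From HB Require Import structures.
From mathcomp Require Import all_boot all_order all_algebra.
Set Implicit Arguments. Unset Strict Implicit. Unset Printing Implicit Defensive.
Import GRing.Theory.
Local Open Scope ring_scope.

Inductive letter (A : Type) := Lt of A | LEnd | REnd .
Arguments LEnd {A}. Arguments REnd {A}.

(** Directions: Left = -1, Right = +1. *)
Inductive dir := Left | Right.

Record trans (Q A : Type) := Trans { sigma : Q; lambda : letter A; delta : dir; tau : Q }.

(** A two-way K-automaton (Q, A, E, I, T); partial functions are option-valued,
    their support is the set where they are defined. *)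
Record twa (K : pzSemiRingType) (A : Type) (Q : finType) := Twa {
  tE : trans Q A -> option K;
  tI : Q -> option K;
  tT : Q -> option K }.

Definition supp (X K : Type) (f : X -> option K) (x : X) : bool := isSome (f x).

Definition wf_twa K A Q (M : twa K A Q) : Prop :=
  forall t, supp (tE M) t ->
    ~ (lambda t = LEnd /\ delta t = Left) /\ ~ (lambda t = REnd /\ delta t = Right).

(** w_i for i in [0; n+1], with w_0 = ⊢ and w_{n+1} = ⊣. *)
Definition wletter (A : Type) (w : seq A) (i : nat) : letter A :=
  if i == 0%N then LEnd
  else match nth None (map Some w) i.-1 with Some a => Lt a | None => REnd end.

(** i' = i + δ (as integers). *)
Definition moves (d : dir) (i i' : nat) : Prop :=
  match d with Right => i' = i.+1 | Left => i'.+1 = i end.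

Definition is_comp K A (Q : finType) (M : twa K A Q) (w : seq A) (c : seq (Q * nat)) : Prop :=
  exists c0 cs, c = c0 :: cs /\
  c0.2 = 1%N /\ (last c0 cs).2 = (size w).+1 /\
  supp (tI M) c0.1 /\ supp (tT M) (last c0 cs).1 /\
  (forall x, x \in c -> (x.2 <= (size w).+1)%N) /\
  (forall j, (j.+1 < size c)%N ->
     exists t, supp (tE M) t /\ sigma t = (nth c0 c j).1 /\ tau t = (nth c0 c j.+1).1 /\
       lambda t = wletter w (nth c0 c j).2 /\ moves (delta t) (nth c0 c j).2 (nth c0 c j.+1).2).

Definition step_trans (A : Type) (Q : Type) (w : seq A) (x y : Q * nat) : trans Q A :=
  Trans x.1 (wletter w x.2) (if y.2 == x.2.+1 then Right else Left) y.1.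

(** Weight I(p_0) ⊗ E(t_0) ⊗ ... ⊗ E(t_{k-1}) ⊗ T(p_k) (used on computations,
    where all these values are defined). *)
Definition weight K A (Q : finType) (M : twa K A Q) (w : seq A) (c : seq (Q * nat)) : K :=
  match c with
  | [::] => 0
  | c0 :: cs =>
      odflt 0 (tI M c0.1)
      * (\prod_(xy <- zip c cs) odflt 0 (tE M (step_trans w xy.1 xy.2)))
      * odflt 0 (tT M (last c0 cs).1)
  end.

Definition tmap (Q R A : Type) (phi : Q -> R) (t : trans Q A) : trans R A :=
  Trans (phi (sigma t)) (lambda t) (delta t) (phi (tau t)).

Definition is_morphism K A (Q R : finType) (M : twa K A Q) (N : twa K A R) (phi : Q -> R) : Prop :=
  (forall p, supp (tI M) p -> tI N (phi p) = tI M p) /\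
  (forall p, supp (tT M) p -> tT N (phi p) = tT M p) /\
  (forall t, supp (tE M) t -> supp (tE N) (tmap phi t) /\ tE N (tmap phi t) = tE M t).

Definition is_surj_morphism K A (Q R : finType) (M : twa K A Q) (N : twa K A R) (phi : Q -> R) : Prop :=
  is_morphism M N phi /\
  (forall r, exists p, phi p = r) /\
  (forall r, supp (tI N) r <-> exists p, supp (tI M) p /\ phi p = r) /\
  (forall r, supp (tT N) r <-> exists p, supp (tT M) p /\ phi p = r) /\
  (forall t, supp (tE N) t <-> exists t', supp (tE M) t' /\ tmap phi t' = t).

Definition is_covering K A (Q R : finType) (M : twa K A Q) (N : twa K A R) (phi : Q -> R) : Prop :=
  is_surj_morphism M N phi /\
  (forall r, supp (tT N) r -> forall p, phi p = r -> supp (tT M) p) /\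
  (forall r, supp (tI N) r -> exists! p, phi p = r /\ supp (tI M) p) /\
  (forall t, supp (tE N) t -> forall p, phi p = sigma t ->
     exists! t', supp (tE M) t' /\ tmap phi t' = t /\ sigma t' = p).

Definition is_in_covering K A (Q R : finType) (M : twa K A Q) (N : twa K A R) (phi : Q -> R) : Prop :=
  is_surj_morphism M N phi /\
  (forall r, supp (tI N) r -> forall p, phi p = r -> supp (tI M) p) /\
  (forall r, supp (tT N) r -> exists! p, phi p = r /\ supp (tT M) p) /\
  (forall t, supp (tE N) t -> forall q, phi q = tau t ->
     exists! t', supp (tE M) t' /\ tmap phi t' = t /\ tau t' = q).

Definition comp_map (Q R : Type) (phi : Q -> R) (c : seq (Q * nat)) : seq (R * nat) :=
  map (fun x => (phi x.1, x.2)) c.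

From mathcomp Require Import all_boot all_order all_algebra.
Set Implicit Arguments. Unset Strict Implicit. Unset Printing Implicit Defensive.
Local Open Scope ring_scope.

(* A step between two configurations is performed by exactly one transition,
   [step_trans]; a morphism sends it to the transition [tmap phi] of the image
   step, which has the same weight.  Hence images of computations are
   computations of the same weight.  Conversely, the determinism conditions of a
   covering say that every step of B lifts uniquely forward from a given lift of
   its source, so a computation of B lifts uniquely from the unique lift of its
   initial state; for an in-covering, steps lift uniquely backward and one lifts
   from the unique lift of the final state. *)

Section PathLift.
Variables (X Y : Type) (f : X -> Y) (e : rel X) (e' : rel Y).

Lemma path_lift :
  (forall x y', e' (f x) y' -> exists! y, e x y /\ f y = y') ->
  forall x s', path e' (f x) s' -> exists! s, path e x s /\ map f s = s'.
Proof.
move=> lift_step x s'; elim: s' x => [|y' s' IHs] x.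
  by move=> _; exists [::]; split=> [|[|? ?] []].
case/andP=> exy' ps'; have [y [[exy fy] y_uniq]] := lift_step x y' exy'.
rewrite -fy in ps'; have [s [[ps fs] s_uniq]] := IHs y ps'.
exists (y :: s); split; first by rewrite /= exy ps fs fy.
move=> [|z t] [] //= /andP[exz pt] [fz ft].
have yz := y_uniq z (conj exz fz); rewrite -yz in pt.
by rewrite (s_uniq t (conj pt ft)) yz.
Qed.

End PathLift.

Lemma sorted_rcons_lift (X Y : Type) (f : X -> Y) (e : rel X) (e' : rel Y) :
  (forall y x', e' x' (f y) -> exists! x, e x y /\ f x = x') ->
  forall y s', sorted e' (rcons s' (f y)) ->
  exists! s, sorted e (rcons s y) /\ map f s = s'.
Proof.
(* Reversed, the chain is a path for the converse relations, lifted forward. *)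
move=> lift_step y s'; rewrite -[rcons s' _]revK rev_sorted rev_rcons /=.
move=> /(path_lift (e := fun a b => e b a) (e' := fun a b => e' b a) lift_step).
move=> [s [[ps fs] s_uniq]].
exists (rev s); split.
  by rewrite -[rcons _ y]revK rev_rcons revK rev_sorted /= ps map_rev fs revK.
move=> t [pt ft]; rewrite -[t]revK; congr rev; apply: s_uniq.
split; last by rewrite map_rev ft.
by rewrite -[path _ _ _]/(sorted _ (y :: rev t)) -rev_rcons rev_sorted.
Qed.

Definition config_map (Q R : Type) (phi : Q -> R) (x : Q * nat) : R * nat :=
  (phi x.1, x.2).

Lemma comp_mapE (Q R : Type) (phi : Q -> R) c : comp_map phi c = map (config_map phi) c.
Proof. by []. Qed.

Lemma tmap_step_trans (Q R A : Type) (phi : Q -> R) (w : seq A) x y :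
  tmap phi (step_trans w x y) = step_trans w (config_map phi x) (config_map phi y).
Proof. by []. Qed.

Lemma step_trans_eq (Q A : Type) (w : seq A) (x y : Q * nat) (t : trans Q A) :
  sigma t = x.1 -> tau t = y.1 -> lambda t = wletter w x.2 -> moves (delta t) x.2 y.2 ->
  step_trans w x y = t.
Proof.
case: t => p a d q /= -> -> ->; rewrite /step_trans.
by case: d => /= <-; rewrite ?eqxx // ltn_eqF.
Qed.

Section Steps.
Variables (K : pzSemiRingType) (A : Type) (Q : finType) (M : twa K A Q) (w : seq A).

(* The witness transition of a step is determined by the two configurations. *)
Definition step (x y : Q * nat) : bool :=
  supp (tE M) (step_trans w x y) && ((y.2 == x.2.+1) || (y.2.+1 == x.2)).

Lemma stepP x y :
  reflect (exists t, supp (tE M) t /\ sigma t = x.1 /\ tau t = y.1 /\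
             lambda t = wletter w x.2 /\ moves (delta t) x.2 y.2)
          (step x y).
Proof.
apply: (iffP andP) => [[st mv] | [t [st [ts [tt [lt mv]]]]]].
  exists (step_trans w x y); rewrite /= /moves; do !split => //.
  by case: eqP mv => //= _ /eqP.
rewrite (step_trans_eq ts tt lt mv); split=> //.
by case: (delta t) mv => /= ->; rewrite eqxx ?orbT.
Qed.

Definition bounded_comp (c : seq (Q * nat)) : bool :=
  all (fun x => x.2 <= (size w).+1)%N c.

Lemma is_comp_nil : ~ is_comp M w [::].
Proof. by case=> ? [? []]. Qed.

Lemma is_comp_cons x s :
  is_comp M w (x :: s) <->
  [/\ x.2 = 1%N, (last x s).2 = (size w).+1, bounded_comp (x :: s),
      supp (tI M) x.1 /\ supp (tT M) (last x s).1 & path step x s].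
Proof.
split=> [[_ [_ [[<- <-] [h1 [hn [hI [hT [hb hp]]]]]]]] | [h1 hn hb [hI hT] hp]].
  split=> //; first exact/allP.
  by apply/(pathP x) => j lt_j; apply/stepP; apply: hp.
exists x, s; do 6!split => //; first exact/allP.
by move=> j lt_j; apply/stepP; apply: (pathP x hp).
Qed.

Lemma is_comp_rcons s x :
  is_comp M w (rcons s x) <->
  [/\ (head x s).2 = 1%N, x.2 = (size w).+1, bounded_comp (rcons s x),
      supp (tI M) (head x s).1 /\ supp (tT M) x.1 & sorted step (rcons s x)].
Proof.
case: s => [|y s]; first exact: is_comp_cons.
by have := is_comp_cons y (rcons s x); rewrite last_rcons rcons_cons.
Qed.

End Steps.

Section Morphism.
Variables (K : pzSemiRingType) (A : Type) (Q R : finType).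
Variables (M : twa K A Q) (N : twa K A R) (phi : Q -> R) (w : seq A).
Hypothesis phi_morph : is_morphism M N phi.

Lemma step_map x y : step M w x y -> step N w (config_map phi x) (config_map phi y).
Proof.
by case/andP=> st mv; rewrite /step -tmap_step_trans (phi_morph.2.2 _ st).1.
Qed.

Lemma step_weight_map x y : step M w x y ->
  tE N (step_trans w (config_map phi x) (config_map phi y)) = tE M (step_trans w x y).
Proof. by case/andP=> st _; rewrite -tmap_step_trans (phi_morph.2.2 _ st).2. Qed.

Lemma bounded_comp_map c : bounded_comp w (map (config_map phi) c) = bounded_comp w c.
Proof. by rewrite /bounded_comp all_map. Qed.

Lemma is_comp_map c : is_comp M w c -> is_comp N w (comp_map phi c).
Proof.
case: c => [/is_comp_nil [] | x s /is_comp_cons [h1 hn hb [hI hT] hp]].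
rewrite comp_mapE /=; apply/is_comp_cons; rewrite last_map -map_cons bounded_comp_map.
split=> //; first by rewrite /supp phi_morph.1 // phi_morph.2.1.
exact: homo_path (@step_map) hp.
Qed.

Lemma prod_step_weight_map x s : path (step M w) x s ->
  \prod_(xy <- zip (x :: s) s) odflt 0 (tE M (step_trans w xy.1 xy.2)) =
  \prod_(xy <- zip (map (config_map phi) (x :: s)) (map (config_map phi) s))
     odflt 0 (tE N (step_trans w xy.1 xy.2)).
Proof.
elim: s x => [|y s IHs] x /=; first by rewrite !big_nil.
by case/andP=> sxy ps; rewrite !big_cons step_weight_map // IHs.
Qed.

Lemma weight_comp_map c : is_comp M w c -> weight M w c = weight N w (comp_map phi c).
Proof.
case: c => [/is_comp_nil [] | x s /is_comp_cons [_ _ _ [hI hT] hp]].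
rewrite /weight comp_mapE /= last_map /= phi_morph.1 // phi_morph.2.1 //.
by rewrite prod_step_weight_map.
Qed.

End Morphism.

Section Lifting.
Variables (K : pzSemiRingType) (A : Type) (Q R : finType).
Variables (M : twa K A Q) (N : twa K A R) (phi : Q -> R) (w : seq A).

Lemma covering_step_lift : is_covering M N phi ->
  forall x y', step N w (config_map phi x) y' ->
  exists! y, step M w x y /\ config_map phi y = y'.
Proof.
move=> [_ [_ [_ trans_lift]]] x [r j] /andP[st mv].
have [t [[st' [tmap_t sigma_t]] t_uniq]] := trans_lift _ st x.1 erefl.
have t_step : step_trans w x (tau t, j) = t.
  by move: tmap_t sigma_t; case: (t) => p a d q [_ -> -> _] /= ->.
exists (tau t, j); split.
  by rewrite /step t_step st' mv /config_map /= -[phi _]/(tau (tmap phi t)) tmap_t.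
move=> [q k] [/andP[sq _] [fq jk]]; subst r j.
by rewrite (t_uniq _ (conj sq (conj erefl erefl))).
Qed.

Lemma in_covering_step_lift : is_in_covering M N phi ->
  forall y x', step N w x' (config_map phi y) ->
  exists! x, step M w x y /\ config_map phi x = x'.
Proof.
move=> [_ [_ [_ trans_lift]]] y [r i] /andP[st mv].
have [t [[st' [tmap_t tau_t]] t_uniq]] := trans_lift _ st y.1 erefl.
have t_step : step_trans w (sigma t, i) y = t.
  by move: tmap_t tau_t; case: (t) => p a d q [_ -> -> _] /= ->.
exists (sigma t, i); split.
  by rewrite /step t_step st' mv /config_map /= -[phi _]/(sigma (tmap phi t)) tmap_t.
move=> [p k] [/andP[sp _] [fp ik]]; subst r i.
by rewrite (t_uniq _ (conj sp (conj erefl erefl))).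
Qed.

Lemma covering_comp_lift : is_covering M N phi ->
  forall c', is_comp N w c' -> exists! c, is_comp M w c /\ comp_map phi c = c'.
Proof.
move=> cov [/is_comp_nil [] | [r i] s' /is_comp_cons [/= -> hn hb [hI hT] hp]].
have [p [[fp pI] p_uniq]] := cov.2.2.1 r hI; subst r.
rewrite -[(phi p, 1%N)]/(config_map phi (p, 1%N)) in hn hT hp *.
have [s [[ps fs] s_uniq]] := path_lift (covering_step_lift cov) hp; subst s'.
rewrite last_map in hn hT.
exists ((p, 1%N) :: s); split.
  split=> //; apply/is_comp_cons; split=> //; last split=> //.
    by rewrite -(bounded_comp_map phi).
  exact: cov.2.1 hT _ erefl.
move=> [|[q j] t] [comp_t]; first by case: (is_comp_nil comp_t).
case/is_comp_cons: comp_t => /= j1 _ _ [qI _] pt [fq _ ft]; subst j.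
have pq := p_uniq q (conj fq qI); subst q.
by rewrite (s_uniq t (conj pt ft)).
Qed.

Lemma in_covering_comp_lift : is_in_covering M N phi ->
  forall c', is_comp N w c' -> exists! c, is_comp M w c /\ comp_map phi c = c'.
Proof.
move=> cov c'; case/lastP: c' => [/is_comp_nil [] | s' [r k]].
case/is_comp_rcons => h1 /= kn hb [hI hT] hp; subst k.
have [q [[fq qT] q_uniq]] := cov.2.2.1 r hT; subst r.
rewrite -[(phi q, _)]/(config_map phi (q, (size w).+1)) in h1 hI hp *.
have [s [[ps fs] s_uniq]] := sorted_rcons_lift (in_covering_step_lift cov) hp; subst s'.
have head_map : head (config_map phi (q, (size w).+1)) (map (config_map phi) s) =
                config_map phi (head (q, (size w).+1) s) by case: (s).
rewrite head_map in h1 hI.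
exists (rcons s (q, (size w).+1)); split.
  split; last by rewrite comp_mapE map_rcons.
  apply/is_comp_rcons; split=> //; last split=> //.
    by rewrite -(bounded_comp_map phi) map_rcons.
  exact: cov.2.1 hI _ erefl.
move=> c [comp_c]; case/lastP: c comp_c => [/is_comp_nil [] | t [p j] comp_t].
rewrite comp_mapE map_rcons => /rcons_inj [ft fp jn]; subst j.
case/is_comp_rcons: comp_t => _ _ _ [_ pT] pt.
have qp := q_uniq p (conj fp pT); subst p.
by rewrite (s_uniq t (conj pt ft)).
Qed.

End Lifting.

Theorem mainTheorem2 (K : pzSemiRingType) (A : Type) (Q R : finType)
  (M : twa K A Q) (N : twa K A R) (phi : Q -> R) :
  wf_twa M -> wf_twa N ->
  is_covering M N phi \/ is_in_covering M N phi ->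
  forall w : seq A,
    (forall c, is_comp M w c ->
       is_comp N w (comp_map phi c) /\ weight M w c = weight N w (comp_map phi c)) /\
    (forall c', is_comp N w c' -> exists! c, is_comp M w c /\ comp_map phi c = c').
Proof.
move=> _ _ cov w.
have phi_morph : is_morphism M N phi by case: cov => [[[]]|[[]]].
split=> [c comp_c | ].
  exact: conj (is_comp_map phi_morph comp_c) (weight_comp_map phi_morph comp_c).
by case: cov; [apply: covering_comp_lift | apply: in_covering_comp_lift].
Qed.
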